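(* Let $k$ be a field of characteristic $\neq 2$, let $\mathfrak g$ be a central simple finite-dimensional Lie algebra over $k$, and let $A$ be a unital commutative associative $k$-algebra. Then every ideal of $\mathfrak g\otimes_k A$ is closed.
   Context: An ideal $\mathfrak a$ of a Lie algebra $L$ is closed if $Z(\mathfrak a):=\{x\in L:[x,L]\subseteq\mathfrak a\}$ equals $\mathfrak a$ (equivalently, $L/\mathfrak a$ has trivial center). $\mathfrak g\otimes_k A$ has bracket $[a\otimes f,b\otimes g]=[a,b]\otimes fg$. *)

From HB Require Import structures.
From mathcomp Require Import all_boot all_order all_algebra.
Set Implicit Arguments. Unset Strict Implicit. Unset Printing Implicit Defensive.
Import GRing.Theory.
Local Open Scope ring_scope.

Section Lie.
Variables (k : fieldType) (V : vectType k).

Definition is_lie_bracket (br : V -> V -> V) : Prop :=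
  [/\ forall x, linear (br x),
      forall y, linear (br^~ y),
      forall x, br x x = 0
    & forall x y z, br x (br y z) + br y (br z x) + br z (br x y) = 0].

Definition lie_ideal_vs (br : V -> V -> V) (I : {vspace V}) : Prop :=
  forall x y, y \in I -> br x y \in I.

Definition lie_simple (br : V -> V -> V) : Prop :=
  (exists x y, br x y != 0) /\
  forall I : {vspace V}, lie_ideal_vs br I -> I = 0%VS \/ I = fullv.

Definition in_centroid (br : V -> V -> V) (f : V -> V) : Prop :=
  linear f /\ forall x y, f (br x y) = br x (f y).

Definition lie_central_simple (br : V -> V -> V) : Prop :=
  lie_simple br /\
  forall f, in_centroid br f -> exists c : k, forall v, f v = c *: v.

(* ---------- the current algebra g (x)_k A ----------
   Concrete model: with e := vbasis fullv a k-basis of V = g,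
   g (x)_k A is the free A-module on e, i.e. {ffun 'I_(dim V) -> A},
   where x stands for \sum_i e_i (x) x i. *)
Variable A : comAlgType k.

Definition curr := {ffun 'I_(\dim (fullv : {vspace V})) -> A}.

Definition basisV : (\dim (fullv : {vspace V})).-tuple V := vbasis fullv.

(* [a (x) f, b (x) g] = [a,b] (x) fg, extended bilinearly *)
Definition curr_br (br : V -> V -> V) (x y : curr) : curr :=
  [ffun l => \sum_i \sum_j
     (coord basisV l (br (tnth basisV i) (tnth basisV j))) *: (x i * y j)].

Definition curr_zero : curr := [ffun => 0].
Definition curr_add (x y : curr) : curr := [ffun i => x i + y i].
Definition curr_scale (c : k) (x : curr) : curr := [ffun i => c *: x i].

Definition curr_ideal (br : V -> V -> V) (I : curr -> Prop) : Prop :=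
  [/\ I curr_zero,
      forall x y, I x -> I y -> I (curr_add x y),
      forall c x, I x -> I (curr_scale c x)
    & forall x y, I y -> I (curr_br br x y)].

Definition Zid (br : V -> V -> V) (I : curr -> Prop) (x : curr) : Prop :=
  forall y, I (curr_br br x y).

Definition curr_closed (br : V -> V -> V) (I : curr -> Prop) : Prop :=
  forall x, Zid br I x <-> I x.

End Lie.

From HB Require Import structures.
From mathcomp Require Import all_boot all_order all_algebra.
From mathcomp Require Import zify.
From Stdlib Require Import Classical.
Set Implicit Arguments. Unset Strict Implicit. Unset Printing Implicit Defensive.
Import GRing.Theory.
Local Open Scope ring_scope.

(* Write x in g (x) A as sum_i e_i (x) x_i for a basis (e_i) of g.  The map
   q |-> sum_i q_i (x) x_i from g^n to g (x) A is g-equivariant, so the preimage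
   P of an ideal I is a g-submodule of g^n, and x in Z(I) says that [y, e] lies
   in P for every y in g.  It thus suffices that a submodule P of g^n contains
   every q with [g, q] in P.  This goes by induction on the support of q: the
   last coordinates of the admissible vectors form an ideal of g, hence are 0
   or all of g, and in the latter case q_i, a sum of brackets [y, z] since g is
   perfect, can be peeled off one bracket at a time. *)

Lemma vspace_of_closed_pred (k : fieldType) (W : vectType k) (S : W -> Prop) :
  S 0 -> (forall u v, S u -> S v -> S (u + v)) -> (forall c u, S u -> S (c *: u)) ->
  exists U : {vspace W}, forall v, v \in U <-> S v.
Proof.
move=> S0 SD SZ.
suff grow (U : {vspace W}) : (forall u, u \in U -> S u) ->
    exists U' : {vspace W}, forall v, v \in U' <-> S v.
  by apply: (grow 0%VS) => u; rewrite memv0 => /eqP ->.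
have [m] := ubnP (\dim {:W} - \dim U); elim: m U => // m IH U codimU US.
have [[v Sv vU] | noS] := classic (exists2 v, S v & v \notin U); last first.
  exists U => v; split=> [/US // | Sv]; apply: contraT => vU.
  by case: noS; exists v.
apply: (IH (U + <[v]>)%VS); last first.
  move=> _ /memv_addP [u uU [_ /vlineP [c ->] ->]].
  exact: SD (US u uU) (SZ c v Sv).
have ltU : (\dim U < \dim (U + <[v]>))%N.
  rewrite (ltn_leqif (dimv_leqif_sup (addvSl U <[v]>))); apply: contra vU => /subvP.
  by apply; apply: subvP (addvSr U _) _ (memv_line v).
have := dimvS (subvf (U + <[v]>)%VS); lia.
Qed.

Section LieBracket.
Variables (k : fieldType) (V : vectType k) (br : V -> V -> V).
Hypothesis br_lie : is_lie_bracket br.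

Lemma br_linr x : linear (br x). Proof. by case: br_lie. Qed.
Lemma br_linl y : linear (br^~ y). Proof. by case: br_lie. Qed.

Lemma brDr x : {morph br x : u v / u + v}.
Proof. exact: (GRing.semilinear_linear (br_linr x)).2. Qed.
Lemma brDl y : {morph br^~ y : u v / u + v}.
Proof. exact: (GRing.semilinear_linear (br_linl y)).2. Qed.
Lemma brZr x a : {morph br x : v / a *: v}.
Proof. exact: scalable_linear (br_linr x) a. Qed.
Lemma brZl y a : {morph br^~ y : v / a *: v}.
Proof. exact: scalable_linear (br_linl y) a. Qed.
Lemma br0r x : br x 0 = 0.
Proof. by apply: (addrI (br x 0)); rewrite -brDr !addr0. Qed.
Lemma br0l y : br 0 y = 0.
Proof. by apply: (addrI (br 0 y)); rewrite -brDl !addr0. Qed.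

Lemma br_sumr x (I : Type) (r : seq I) (P : pred I) (F : I -> V) :
  br x (\sum_(i <- r | P i) F i) = \sum_(i <- r | P i) br x (F i).
Proof. exact: (big_morph (br x) (brDr x) (br0r x)). Qed.

Lemma br_suml y (I : Type) (r : seq I) (P : pred I) (F : I -> V) :
  br (\sum_(i <- r | P i) F i) y = \sum_(i <- r | P i) br (F i) y.
Proof. exact: (big_morph (br^~ y) (brDl y) (br0l y)). Qed.

Lemma br_anticomm x y : br x y = - br y x.
Proof.
case: br_lie => _ _ alt _; apply/eqP; rewrite -addr_eq0.
by have := alt (x + y); rewrite brDl !brDr !alt add0r addr0 => ->.
Qed.

End LieBracket.

Section SimpleLie.
Variables (k : fieldType) (V : vectType k) (br : V -> V -> V).
Hypothesis br_lie : is_lie_bracket br.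
Hypothesis br_simple : lie_simple br.

Lemma lie_simple_ideal_dichotomy (S : V -> Prop) :
  S 0 -> (forall u v, S u -> S v -> S (u + v)) -> (forall c u, S u -> S (c *: u)) ->
  (forall x v, S v -> S (br x v)) ->
  (forall v, S v -> v = 0) \/ (forall v, S v).
Proof.
move=> S0 SD SZ Sbr; have [U USE] := vspace_of_closed_pred S0 SD SZ.
have [_ /(_ U) []] := br_simple; first by move=> x y /USE Sy; apply/USE/Sbr.
  by move=> U0; left=> v /USE; rewrite U0 memv0 => /eqP.
by move=> U1; right=> v; apply/USE; rewrite U1 memvf.
Qed.

Inductive bracket_sum : V -> Prop :=
| bracket_sum0 : bracket_sum 0
| bracket_sumD y z v : bracket_sum v -> bracket_sum (br y z + v).

Lemma bracket_sum_br y z : bracket_sum (br y z).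
Proof. by rewrite -[br y z]addr0; apply/bracket_sumD/bracket_sum0. Qed.

Lemma lie_simple_perfect v : bracket_sum v.
Proof.
have sumD u w : bracket_sum u -> bracket_sum w -> bracket_sum (u + w).
  by elim=> [|y z u' _ IH] sw; rewrite ?add0r // -addrA; apply/bracket_sumD/IH.
have sumZ c u : bracket_sum u -> bracket_sum (c *: u).
  elim=> [|y z u' _ IH]; first by rewrite scaler0; apply: bracket_sum0.
  by rewrite scalerDr -brZr //; apply: bracket_sumD.
have [sum0 | //] := lie_simple_ideal_dichotomy bracket_sum0 sumD sumZ
  (fun x v _ => bracket_sum_br x v).
have [[x [y /negP xy]] _] := br_simple.
by case: xy; apply/eqP/sum0/bracket_sum_br.
Qed.

End SimpleLie.

Section DiagonalModule.
Variables (k : fieldType) (V : vectType k) (br : V -> V -> V) (n : nat).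
Local Notation F := {ffun 'I_n -> V}.

Definition diag_ad (y : V) (q : F) : F := [ffun j => br y (q j)].

Record diag_submodule (P : F -> Prop) : Prop := DiagSubmodule {
  submod0 : P 0;
  submodD : forall p q, P p -> P q -> P (p + q);
  submodZ : forall c q, P q -> P (c *: q);
  submod_ad : forall y q, P q -> P (diag_ad y q)
}.

Lemma submodB P p q : diag_submodule P -> P p -> P q -> P (p - q).
Proof. by move=> P_sub Pp Pq; rewrite -scaleN1r; apply/(submodD P_sub)/(submodZ P_sub). Qed.

Definition supported_below (m : nat) (q : F) := forall j : 'I_n, (m <= j)%N -> q j = 0.

Lemma diag_submoduleI P1 P2 :
  diag_submodule P1 -> diag_submodule P2 -> diag_submodule (fun q => P1 q /\ P2 q).
Proof.
case=> [P1_0 P1D P1Z P1ad] [P2_0 P2D P2Z P2ad]; split=> //.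
- by move=> p q [? ?] [? ?]; split; [apply: P1D | apply: P2D].
- by move=> c q [? ?]; split; [apply: P1Z | apply: P2Z].
- by move=> y q [? ?]; split; [apply: P1ad | apply: P2ad].
Qed.

Hypothesis br_lie : is_lie_bracket br.

Lemma supported_below_submodule m : diag_submodule (supported_below m).
Proof.
split=> [j _ | p q sp sq j mj | c q sq j mj | y q sq j mj]; rewrite !ffunE.
- by [].
- by rewrite sp ?sq ?addr0.
- by rewrite sq ?scaler0.
- by rewrite sq ?br0r.
Qed.

Lemma ad_preimage_submodule P :
  diag_submodule P -> diag_submodule (fun q => forall y, P (diag_ad y q)).
Proof.
move=> P_sub; split=> [y | p q Pp Pq y | c q Pq y | z q Pq y].
- suff -> : diag_ad y 0 = 0 by exact: submod0.
  by apply/ffunP => j; rewrite !ffunE br0r.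
- suff -> : diag_ad y (p + q) = diag_ad y p + diag_ad y q by exact: submodD.
  by apply/ffunP => j; rewrite !ffunE brDr.
- suff -> : diag_ad y (c *: q) = c *: diag_ad y q by exact: submodZ.
  by apply/ffunP => j; rewrite !ffunE brZr.
- exact: submod_ad.
Qed.

Hypothesis br_simple : lie_simple br.

Lemma diag_submodule_coord R (i : 'I_n) : diag_submodule R ->
  (forall q, R q -> q i = 0) \/ (forall v, exists2 q, R q & q i = v).
Proof.
case=> [R0 RD RZ Rad]; pose S v := exists2 q, R q & q i = v.
have S0 : S 0 by exists 0; rewrite ?ffunE.
have SD u v : S u -> S v -> S (u + v).
  by move=> [p Rp <-] [q Rq <-]; exists (p + q); rewrite ?ffunE //; apply: RD.
have SZ c v : S v -> S (c *: v).
  by move=> [q Rq <-]; exists (c *: q); rewrite ?ffunE //; apply: RZ.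
have Sbr x v : S v -> S (br x v).
  by move=> [q Rq <-]; exists (diag_ad x q); rewrite ?ffunE //; apply: Rad.
have [S_0 | S_all] := lie_simple_ideal_dichotomy br_simple S0 SD SZ Sbr; last by right.
by left=> q Rq; apply: S_0; exists q.
Qed.

Section AdPreimage.
Variable P : F -> Prop.
Hypothesis P_sub : diag_submodule P.

Lemma ad_preimage_supported m q :
  (forall y, P (diag_ad y q)) -> supported_below m q -> P q.
Proof.
elim: m q => [|m IH] q adq supp_q.
  suff -> : q = 0 by exact: submod0.
  by apply/ffunP => j; rewrite ffunE supp_q.
have [lt_mn | le_nm] := ltnP m n; last first.
  by apply: IH => // j mj; exfalso; have := ltn_ord j; lia.
pose i := Ordinal lt_mn.
have drop_i p : supported_below m.+1 p -> p i = 0 -> supported_below m p.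
  move=> supp_p pi j; rewrite leq_eqVlt => /orP [/eqP mj | ]; last exact: supp_p.
  by have -> : j = i by apply: val_inj.
pose R p := (forall y, P (diag_ad y p)) /\ supported_below m.+1 p.
have R_sub : diag_submodule R := diag_submoduleI
  (ad_preimage_submodule P_sub) (supported_below_submodule m.+1).
have [coord0 | coord_onto] := diag_submodule_coord i R_sub.
  by apply: IH (drop_i _ supp_q (coord0 q (conj adq supp_q))).
suff sum_case : forall v, bracket_sum br v -> forall p, R p -> p i = v -> P p.
  exact: sum_case (lie_simple_perfect br_lie br_simple (q i)) q (conj adq supp_q) erefl.
move=> v; elim=> [|y z v' _ IHv] p [adp supp_p] piv.
  exact: IH (drop_i _ supp_p piv).
have [pz Rpz pzi] := coord_onto z.
rewrite -[p](subrK (diag_ad y pz)); apply: (submodD P_sub _ (Rpz.1 y)).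
apply: IHv; first exact: submodB R_sub (conj adp supp_p) (submod_ad R_sub y Rpz).
by rewrite !ffunE piv pzi addrC addKr.
Qed.

End AdPreimage.

Lemma diag_submodule_closed P q :
  diag_submodule P -> (forall y, P (diag_ad y q)) -> P q.
Proof.
move=> P_sub adq; apply: (ad_preimage_supported P_sub (m := n)) => // j.
by rewrite leqNgt ltn_ord.
Qed.

End DiagonalModule.

Section CurrentAlgebra.
Variables (k : fieldType) (V : vectType k) (br : V -> V -> V) (A : comAlgType k).
Hypothesis br_lie : is_lie_bracket br.
Local Notation n := (\dim {:V}).
Local Notation e i := (tnth (basisV V) i).
Local Notation coordV := (coord (basisV V)).

(* With x = sum_i e_i (x) x_i, [curr_subst x q] is sum_i q_i (x) x_i. *)
Definition curr_subst (x : curr V A) (q : {ffun 'I_n -> V}) : curr V A :=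
  [ffun l => \sum_i coordV l (q i) *: x i].

Definition tens1 (y : V) : curr V A := [ffun i => coordV i y *: 1].

Lemma curr_subst0 x : curr_subst x 0 = curr_zero V A.
Proof. by apply/ffunP => l; rewrite !ffunE big1 // => i _; rewrite ffunE linear0 scale0r. Qed.

Lemma curr_substD x p q :
  curr_subst x (p + q) = curr_add (curr_subst x p) (curr_subst x q).
Proof.
apply/ffunP => l; rewrite !ffunE -big_split; apply: eq_bigr => i _.
by rewrite ffunE linearD scalerDl.
Qed.

Lemma curr_substZ x c q : curr_subst x (c *: q) = curr_scale c (curr_subst x q).
Proof.
apply/ffunP => l; rewrite !ffunE scaler_sumr; apply: eq_bigr => i _.
by rewrite ffunE linearZ scalerA.
Qed.

Lemma curr_subst_basis x : curr_subst x [ffun i => e i] = x.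
Proof.
have e_free : free (basisV V) := basis_free (vbasisP fullv).
apply/ffunP => l; rewrite ffunE (bigD1 l) //= big1 ?addr0 => [|i /negbTE il].
  by rewrite ffunE (tnth_nth 0) coord_free // eqxx scale1r.
by rewrite ffunE (tnth_nth 0) coord_free // il scale0r.
Qed.

Lemma coord_br l y w :
  coordV l (br y w) = \sum_i \sum_j (coordV i y * coordV j w) * coordV l (br (e i) (e j)).
Proof.
rewrite {1}(coord_vbasis (memvf y)) {1}(coord_vbasis (memvf w)).
rewrite br_suml // linear_sum; apply: eq_bigr => i _.
rewrite brZl // linearZ /= br_sumr // linear_sum mulr_sumr; apply: eq_bigr => j _.
by rewrite brZr // linearZ /= !(tnth_nth 0) mulrA.
Qed.

Lemma curr_subst_ad x y q :
  curr_subst x (diag_ad br y q) = curr_br br (tens1 y) (curr_subst x q).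
Proof.
apply/ffunP => l; rewrite !ffunE.
under eq_bigr => m _ do rewrite ffunE coord_br scaler_suml.
rewrite exchange_big /=; apply: eq_bigr => i _.
under eq_bigr => m _ do rewrite scaler_suml.
rewrite exchange_big /=; apply: eq_bigr => j _.
rewrite !ffunE -scalerAl mul1r scalerA scaler_sumr; apply: eq_bigr => m _.
by rewrite !scalerA; congr (_ *: _); rewrite mulrC !mulrA.
Qed.

Lemma curr_brC (x y : curr V A) : curr_br br x y = curr_scale (-1) (curr_br br y x).
Proof.
apply/ffunP => l; rewrite !ffunE exchange_big scaler_sumr; apply: eq_bigr => i _.
rewrite scaler_sumr; apply: eq_bigr => j _.
by rewrite br_anticomm // linearN /= [x _ * _]mulrC scaleNr scaleN1r.
Qed.

Lemma curr_subst_preimage_submodule (I : curr V A -> Prop) x :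
  curr_ideal br I -> diag_submodule br (fun q => I (curr_subst x q)).
Proof.
case=> I0 ID IZ Ibr; split=> [|p q Ip Iq|c q Iq|y q Iq].
- by rewrite curr_subst0.
- by rewrite curr_substD; apply: ID.
- by rewrite curr_substZ; apply: IZ.
- by rewrite curr_subst_ad; apply: Ibr.
Qed.

End CurrentAlgebra.

Theorem corollary4p4 (k : fieldType) (V : vectType k) (br : V -> V -> V)
  (A : comAlgType k) :
  (2 \notin [pchar k])%N ->
  is_lie_bracket br ->
  lie_central_simple br ->
  forall I : curr V A -> Prop, curr_ideal br I -> curr_closed br I.
Proof.
move=> _ br_lie [br_simple _] I I_ideal x; have [_ _ IZ Ibr] := I_ideal.
split=> [Zx | Ix y]; last by rewrite curr_brC //; apply/IZ/Ibr.
rewrite -(curr_subst_basis x).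
apply: (diag_submodule_closed br_lie br_simple
  (curr_subst_preimage_submodule br_lie x I_ideal)) => y.
by rewrite curr_subst_ad // curr_subst_basis curr_brC //; apply/IZ/Zx.
Qed.
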